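(* Let $\chi,b,\nu,\mu>0$, $c\in\mathbb{R}$, $r$ as in the context, and assume $b>2\chi\mu$ and $c>\frac{\chi\mu r^*}{2\sqrt{\nu}(b-\chi\mu)}-2\sqrt{\frac{r^*(b-2\chi\mu)}{b-\chi\mu}}$. For any $u\in\mathcal{E}_1$, $U_1^*(\cdot;u)$ is the unique positive solution in $\mathcal{E}_1$ of $$0=U_{xx}+(c-\chi\Psi_x(x;u))U_x+(r(x)-\chi\nu\Psi(x;u)-(b-\chi\mu)U)U,\quad x\in\mathbb{R}.$$
   Context: $r$ is globally Hölder continuous and bounded, with finite limits $r(\pm\infty)$, $r(-\infty)<0<r(\infty)$, $r(-\infty)\le r(x)\le r(\infty)$; $r^*=\sup r=r(\infty)$. $C^b_{\rm unif}(\mathbb{R})$: bounded uniformly continuous functions; $\Psi(x;u)=\frac{\mu}{2\sqrt\nu}\int_{\mathbb{R}}e^{-\sqrt\nu|x-y|}u(y)dy$; $\mathcal{A}_u(U)=U_{xx}+(c-\chi\Psi_x(x;u))U_x+(r(x)-\chi\nu\Psi(x;u)-(b-\chi\mu)U)U$. Fix $r_1\in(r(-\infty),0)$, $x_1$ with $r(x)\le r_1$ for $x\le x_1$, $\theta_1$ the positive root of $\theta^2+c\theta+r_1=0$, and $U_1^+(x)=\min\{\frac{r^*}{b-\chi\mu},\frac{r^*}{b-\chi\mu}e^{\theta_1(x-x_1)}\}$. For $\varepsilon>0$ let $f_\varepsilon(u)=u(r^*-\varepsilon-\frac{\chi\mu r^*}{b-\chi\mu}-(b-\chi\mu)u)$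 for $u\ge0$, $f_\varepsilon=0$ on $[-\varepsilon,0)$; let $(\phi_\varepsilon,\tilde c_\varepsilon)$ be a decreasing traveling wave: $\phi_\varepsilon''+\tilde c_\varepsilon\phi_\varepsilon'+f_\varepsilon(\phi_\varepsilon)=0$, $\phi_\varepsilon(-\infty)=\frac{(r^*-\varepsilon)(b-\chi\mu)-\chi\mu r^*}{(b-\chi\mu)^2}$, $\phi_\varepsilon(\infty)=-\varepsilon$ (such waves exist with $\tilde c_\varepsilon\to2\sqrt{r^*(b-2\chi\mu)/(b-\chi\mu)}$ as $\varepsilon\to0^+$). With $\delta:=c-\frac{\chi\mu r^*}{2\sqrt\nu(b-\chi\mu)}+2\sqrt{\frac{r^*(b-2\chi\mu)}{b-\chi\mu}}>0$, fix $\varepsilon\in\big(0,\frac{r^*(b-2\chi\mu)}{b-\chi\mu}\big)$ with $\tilde c_\varepsilon>2\sqrt{\frac{r^*(b-2\chi\mu)}{b-\chi\mu}}-\frac\delta2$. Let $\psi_\varepsilon(x)=\phi_\varepsilon(-x)$, translated so that $\psi_\varepsilon(x_0)=0$ for some $x_0>x_1$ with $r(x)\ge r^*-\varepsilon$ for $x>x_0$. $U_1^-=\max\{\psi_\varepsilon,0\}$, $\mathcal{E}_1=\{u\in C^b_{\rm unif}(\mathbb{R}):U_1^-\le u\le U_1^+\}$. For $u\in\mathcal{E}_1$, $U_1^*(x;u)=\lim_{t\to\infty}U(t,x;u)$ where $U(t,x;u)$ solves $U_t=\mathcal{A}_u(U)$, $U(0,\cdot;u)=U_1^+$ (this limit exists,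 lies in $\mathcal{E}_1$ and solves the displayed elliptic equation). *)

From Stdlib Require Import Reals.
From Coquelicot Require Import Coquelicot.
Open Scope R_scope.

Definition Cb_unif (u : R -> R) : Prop :=
  (exists M, forall x, Rabs (u x) <= M) /\
  (forall e, 0 < e -> exists d, 0 < d /\
     forall x y, Rabs (x - y) < d -> Rabs (u x - u y) < e).

Definition Holder_cont (r : R -> R) : Prop :=
  exists alpha K, 0 < alpha <= 1 /\ 0 <= K /\
    forall x y, Rabs (r x - r y) <= K * Rpower (Rabs (x - y)) alpha.

Definition Psi (nu mu : R) (u : R -> R) (x : R) : R :=
  mu / (2 * sqrt nu) *
  RInt_gen (fun y => exp (- sqrt nu * Rabs (x - y)) * u y)
           (Rbar_locally m_infty) (Rbar_locally p_infty).

Definition Psi_x (nu mu : R) (u : R -> R) (x : R) : R :=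
  Derive (Psi nu mu u) x.

Definition Aop (c chi nu mu b : R) (r : R -> R) (u U : R -> R) (x : R) : R :=
  Derive (Derive U) x + (c - chi * Psi_x nu mu u x) * Derive U x
  + (r x - chi * nu * Psi nu mu u x - (b - chi * mu) * U x) * U x.

Definition elliptic_sol (c chi nu mu b : R) (r : R -> R) (u U : R -> R) : Prop :=
  (forall x, ex_derive U x) /\ (forall x, ex_derive (Derive U) x) /\
  (forall x, Aop c chi nu mu b r u U x = 0).

Definition parabolic_sol (c chi nu mu b : R) (r : R -> R) (u U0 : R -> R)
    (U : R -> R -> R) : Prop :=
  (forall x, U 0 x = U0 x) /\
  (exists M, forall t x, 0 <= t -> Rabs (U t x) <= M) /\
  (forall e, 0 < e -> exists d, 0 < d /\
     forall t x, 0 < t < d -> Rabs (U t x - U0 x) < e) /\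
  (forall t x, 0 < t ->
     ex_derive (fun s => U s x) t /\ ex_derive (U t) x /\
     ex_derive (Derive (U t)) x /\
     Derive (fun s => U s x) t = Aop c chi nu mu b r u (U t) x).

Definition f_eps (rstar eps chi mu b : R) (v : R) : R :=
  if Rle_dec 0 v then
    v * (rstar - eps - chi * mu * rstar / (b - chi * mu) - (b - chi * mu) * v)
  else 0.

Definition U1plus (rstar chi mu b theta1 x1 : R) (x : R) : R :=
  Rmin (rstar / (b - chi * mu)) (rstar / (b - chi * mu) * exp (theta1 * (x - x1))).

Definition in_E1 (U1m U1p : R -> R) (u : R -> R) : Prop :=
  Cb_unif u /\ forall x, U1m x <= u x <= U1p x.

(** Positivity: for a nonnegative solution, the flux [e^P V'] has derivative
    [- e^P (q - beta V) V], so a zero of [V] propagates a fixed distance to the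
    right; this is impossible since [V >= U_1^-] is bounded below near [+oo].

    Uniqueness: for positive solutions [V1], [V2] the weighted Wronskian
    [W = e^P (V1' V2 - V1 V2')] satisfies [W' = beta e^P V1 V2 (V1 - V2)] and
    [(V1/V2)' = W e^-P / V2^2].  If [V1 > V2] at [y], the ratio [V1/V2] stays
    above its value at [y] on the side selected by the sign of [W y], and [W] is
    monotone there.  On the right, [W] then grows like [e^(c x)], so [V1/V2]
    grows linearly, contradicting [V1 <= R0] and [V2 >= K/2].  On the left,
    [V1 <= C e^(theta1 x)] with [c + 2 theta1 > 0] gives [(V2/V1)'] a positive
    lower bound, so [V2/V1] would become negative. *)

From Stdlib Require Import Reals Lra Classical.
From Coquelicot Require Import Coquelicot.
Open Scope R_scope.

Lemma ex_derive_continuity_pt (f : R -> R) x : ex_derive f x -> continuity_pt f x.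
Proof.
  intro Hf. apply continuity_pt_filterlim.
  exact (@ex_derive_continuous R_AbsRing R_NormedModule f x Hf).
Qed.

Lemma exp_le_compat x y : x <= y -> exp x <= exp y.
Proof.
  intro H. destruct (Rle_lt_or_eq_dec _ _ H) as [Hlt|<-]; [|lra].
  left. now apply exp_increasing.
Qed.

Lemma exp_opp_mul_inv k t : exp (- k * t) * exp (k * t) = 1.
Proof. rewrite <- exp_plus, <- exp_0. f_equal. ring. Qed.

Lemma MVT_is_derive (f df : R -> R) a b :
  (forall t, is_derive f t (df t)) -> a < b ->
  exists c, a < c < b /\ f b - f a = df c * (b - a).
Proof.
  intros Hf Hab. destruct (MVT_cor2 f df a b Hab) as [c [E Hc]].
  - intros t _. apply is_derive_Reals, Hf.
  - now exists c.
Qed.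

Lemma MVT_is_derive_le (f df : R -> R) a b :
  (forall t, is_derive f t (df t)) -> a <= b ->
  exists c, a <= c <= b /\ f b - f a = df c * (b - a).
Proof.
  intros Hf Hab. destruct (Req_dec a b) as [<-|Hne].
  - exists a. split; [lra | ring].
  - destruct (MVT_is_derive f df a b Hf) as [c [Hc E]]; [lra|].
    exists c. split; [lra | exact E].
Qed.

Lemma derive_ge_increment (f df : R -> R) m a b :
  (forall t, is_derive f t (df t)) -> a <= b ->
  (forall t, a < t < b -> m <= df t) -> f a + m * (b - a) <= f b.
Proof.
  intros Hf Hab Hm. destruct (Req_dec a b) as [<-|Hne]; [lra|].
  destruct (MVT_is_derive f df a b Hf) as [c [Hc E]]; [lra|].
  specialize (Hm c Hc). nra.
Qed.

Lemma derive_nonneg_le (f df : R -> R) a b :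
  (forall t, is_derive f t (df t)) -> a <= b ->
  (forall t, a < t < b -> 0 <= df t) -> f a <= f b.
Proof.
  intros Hf Hab Hd. assert (H := derive_ge_increment f df 0 a b Hf Hab Hd). lra.
Qed.

Lemma is_derive_min_eq_0 (f : R -> R) x l :
  is_derive f x l -> (forall y, f x <= f y) -> l = 0.
Proof.
  intros Hf Hmin.
  assert (pr : derivable_pt f x) by (exists l; apply is_derive_Reals, Hf).
  rewrite <- (derive_pt_eq_0 f x l pr) by (apply is_derive_Reals, Hf).
  apply (deriv_minimum f (x - 1) (x + 1) x pr); try lra.
  intros; apply Hmin.
Qed.

Lemma is_derive_reflect (f df : R -> R) t :
  is_derive f (- t) (df (- t)) -> is_derive (fun s => f (- s)) t (- df (- t)).
Proof.
  intro Hf. apply (is_derive_ext (fun s => f (- s))); [reflexivity|].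
  replace (- df (- t)) with (scal (-1) (df (- t)))
    by (unfold scal; simpl; unfold mult; simpl; ring).
  apply (is_derive_comp f (fun s => - s)); [exact Hf|].
  auto_derive; [exact I | ring].
Qed.

Lemma continuity_pt_gt (f : R -> R) t L :
  continuity_pt f t -> L < f t ->
  exists d, 0 < d /\ forall w, Rabs (w - t) < d -> L < f w.
Proof.
  intros Hc Ht. apply continuity_pt_filterlim in Hc.
  destruct (proj1 (filterlim_locally _ _) Hc (mkposreal _ (proj2 (Rlt_0_minus _ _) Ht)))
    as [[d Hd] Hball].
  exists d. split; [exact Hd|]. intros w Hw.
  assert (Hb : Rabs (f w - f t) < f t - L) by exact (Hball w Hw).
  apply Rabs_def2 in Hb. lra.
Qed.

Lemma first_crossing (f : R -> R) L y x :
  y <= x -> (forall t, continuity_pt f t) -> L < f y -> f x <= L ->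
  exists t, y < t <= x /\ f t <= L /\ forall v, y <= v < t -> L < f v.
Proof.
  intros Hyx Hc Hy Hx.
  set (E v := y <= v <= x /\ forall w, y <= w <= v -> L < f w).
  assert (Ey : E y) by (split; [lra | intros w Hw; replace w with y by lra; exact Hy]).
  destruct (completeness E) as [t [Hub Hlub]]; [exists x; intros v [Hv _]; lra | now exists y |].
  assert (Hyt : y <= t) by now apply Hub.
  assert (Htx : t <= x) by (apply Hlub; intros v [Hv _]; lra).
  assert (Hbelow : forall v, y <= v < t -> L < f v).
  { intros v Hv. apply NNPP. intro Hfv. assert (t <= v); [|lra].
    apply Hlub. intros e [He1 He2]. apply Rnot_lt_le. intro Hve. apply Hfv, He2. lra. }
  assert (Ht : f t <= L).
  { apply Rnot_lt_le. intro Hft.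
    destruct (continuity_pt_gt f t L (Hc t) Hft) as [d [Hd Hnear]].
    assert (Htx' : t < x) by (destruct (Req_dec t x) as [<-|]; lra).
    assert (Hin : E (Rmin x (t + d / 2))).
    { split; [split; [apply Rmin_glb | apply Rmin_l]; lra|].
      intros w Hw. destruct (Rlt_or_le w t); [apply Hbelow; lra|].
      apply Hnear. assert (Rmin x (t + d / 2) <= t + d / 2) by apply Rmin_r.
      apply Rabs_def1; lra. }
    assert (Hle : Rmin x (t + d / 2) <= t) by now apply Hub.
    revert Hle; apply Rmin_case; lra. }
  exists t. split; [|split; assumption].
  split; [|exact Htx]. destruct (Req_dec y t) as [<-|]; lra.
Qed.

Lemma stays_above_right (z G dG a : R -> R) :
  (forall t, is_derive z t (G t * a t)) -> (forall t, is_derive G t (dG t)) ->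
  (forall t, 0 < a t) -> (forall t, 1 < z t -> 0 <= dG t) ->
  forall y, 1 < z y -> 0 <= G y -> forall x, y <= x -> z y <= z x.
Proof.
  intros Hz HG Ha HdG y Hy HGy x Hyx. apply Rnot_lt_le. intro Hlt.
  set (L := Rmax 1 ((z x + z y) / 2)).
  assert (HL : 1 <= L /\ L < z y /\ z x <= L).
  { unfold L. split; [apply Rmax_l|]. split; [apply Rmax_case; lra|].
    eapply Rle_trans; [|apply Rmax_r]. lra. }
  assert (Hcont : forall t, continuity_pt z t).
  { intro t. apply ex_derive_continuity_pt. eexists. apply Hz. }
  destruct (first_crossing z L y x Hyx Hcont) as [t [Ht [Hzt Habove]]]; try lra.
  assert (HGincr : forall v, y <= v <= t -> G y <= G v).
  { intros v Hv. apply (derive_nonneg_le G dG); [exact HG | lra |].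
    intros s Hs. apply HdG. assert (L < z s) by (apply Habove; lra). lra. }
  assert (z y <= z t); [|lra].
  apply (derive_nonneg_le z (fun s => G s * a s)); [exact Hz | lra |].
  intros s Hs. apply Rmult_le_pos; [|left; apply Ha].
  assert (G y <= G s) by (apply HGincr; lra). lra.
Qed.

Lemma stays_above_left (z G dG a : R -> R) :
  (forall t, is_derive z t (G t * a t)) -> (forall t, is_derive G t (dG t)) ->
  (forall t, 0 < a t) -> (forall t, 1 < z t -> 0 <= dG t) ->
  forall y, 1 < z y -> G y <= 0 -> forall x, x <= y -> z y <= z x.
Proof.
  intros Hz HG Ha HdG y Hy HGy x Hxy.
  replace y with (- - y) by ring. replace x with (- - x) by ring.
  apply (stays_above_right (fun t => z (- t)) (fun t => - G (- t)) (fun t => dG (- t))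
           (fun t => a (- t))); try lra.
  - intro t. replace (- G (- t) * a (- t)) with (- (G (- t) * a (- t))) by ring.
    apply (is_derive_reflect z (fun s => G s * a s)), Hz.
  - intro t. rewrite <- (Ropp_involutive (dG (- t))).
    apply (is_derive_opp (fun s => G (- s))), is_derive_reflect, HG.
  - intro t. apply Ha.
  - intro t. apply HdG.
  - now rewrite Ropp_involutive.
  - rewrite Ropp_involutive. lra.
Qed.

(** * Improper integrals and the potential [Psi] *)

Lemma nondecreasing_bounded_is_lim_p_infty (F : R -> R) M :
  (forall a b, a <= b -> F a <= F b) -> (forall a, F a <= M) ->
  exists l : R, is_lim F p_infty l /\ forall a, F a <= l.
Proof.
  intros Hincr Hbnd.
  destruct (completeness (fun v => exists a, v = F a)) as [l [Hub Hlub]].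
  { exists M. intros v [a ->]. apply Hbnd. }
  { exists (F 0), 0. reflexivity. }
  assert (HFl : forall a, F a <= l) by (intro a; apply Hub; now exists a).
  exists l. split; [|exact HFl].
  apply is_lim_spec. intros [eps Heps]. simpl.
  destruct (classic (exists a0, l - eps < F a0)) as [[a0 Ha0]|Hno].
  - exists a0. intros x Hx.
    specialize (Hincr a0 x (Rlt_le _ _ Hx)). specialize (HFl x). apply Rabs_def1; lra.
  - exfalso. assert (l <= l - eps); [|lra].
    apply Hlub. intros v [a ->]. apply Rnot_lt_le. intro Ha. apply Hno. now exists a.
Qed.

Lemma nondecreasing_bounded_is_lim_m_infty (F : R -> R) m :
  (forall a b, a <= b -> F a <= F b) -> (forall a, m <= F a) ->
  exists l : R, is_lim F m_infty l /\ forall a, l <= F a.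
Proof.
  intros Hincr Hbnd.
  destruct (nondecreasing_bounded_is_lim_p_infty (fun x => - F (- x)) (- m)) as [l [Hl Hle]].
  { intros a b Hab. apply Ropp_le_contravar, Hincr. lra. }
  { intro a. specialize (Hbnd (- a)). lra. }
  exists (- l). split.
  - apply is_lim_spec in Hl. apply is_lim_spec. intro eps. destruct (Hl eps) as [M HM].
    exists (- M). intros x Hx. specialize (HM (- x) ltac:(lra)).
    rewrite Ropp_involutive in HM.
    replace (F x - - l) with (- (- F x - l)) by ring. now rewrite Rabs_Ropp.
  - intro a. specialize (Hle (- a)). rewrite Ropp_involutive in Hle. lra.
Qed.

Lemma filterlim_at_point_self (F : R -> R) x : filterlim F (at_point x) (locally (F x)).
Proof. intros P HP. exact (locally_singleton _ _ HP). Qed.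

Lemma is_RInt_gen_antiderivative {Fa Fb : (R -> Prop) -> Prop} {FFa : Filter Fa}
  {FFb : Filter Fb} (g F : R -> R) la lb :
  (forall y, continuous g y) -> (forall y, is_derive F y (g y)) ->
  filterlim F Fa (locally la) -> filterlim F Fb (locally lb) ->
  is_RInt_gen g Fa Fb (lb - la).
Proof.
  intros Hg HF Ha Hb.
  assert (HDF : forall y, Derive F y = g y) by (intro; apply is_derive_unique, HF).
  apply (is_RInt_gen_ext (Derive F)).
  - apply filter_forall. intros ab y _. apply HDF.
  - apply is_RInt_gen_Derive; try assumption.
    + apply filter_forall. intros ab y _. eexists. apply HF.
    + apply filter_forall. intros ab y _.
      apply (continuous_ext g); [intro; symmetry; apply HDF | apply Hg].
Qed.

Lemma is_derive_RInt_0 (g : R -> R) x :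
  (forall y, continuous g y) -> is_derive (fun b => RInt g 0 b) x (g x).
Proof.
  intro Hg. apply (is_derive_RInt g _ 0); [|apply Hg].
  apply filter_forall. intro b. apply (@RInt_correct R_CompleteNormedModule).
  apply (@ex_RInt_continuous R_CompleteNormedModule). intros; apply Hg.
Qed.

Lemma antiderivative_gap (g F : R -> R) k C :
  k <> 0 -> (forall y, is_derive F y (g y)) -> (forall y, g y <= C * exp (k * y)) ->
  forall a b, a <= b -> F b - F a <= C * exp (k * b) / k - C * exp (k * a) / k.
Proof.
  intros Hk HF Hg a b Hab.
  assert (Hd : forall t,
    is_derive (fun t => C * exp (k * t) / k - F t) t (C * exp (k * t) - g t)).
  { intro t. apply (is_derive_minus (fun t => C * exp (k * t) / k)); [|apply HF].
    auto_derive; [exact I | field; exact Hk]. }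
  assert (Hslope : forall t, a < t < b -> 0 <= C * exp (k * t) - g t)
    by (intros t _; specialize (Hg t); lra).
  assert (H := derive_nonneg_le _ _ a b Hd Hab Hslope). lra.
Qed.

Lemma tail_integral_left (g : R -> R) s C :
  0 < s -> (forall y, continuous g y) -> (forall y, 0 <= g y <= C * exp (s * y)) ->
  exists A : R -> R,
    (forall x, is_RInt_gen g (Rbar_locally m_infty) (at_point x) (A x)) /\
    (forall x, is_derive A x (g x)) /\ (forall x, 0 <= A x <= C * exp (s * x) / s).
Proof.
  intros Hs Hg Hbnd. set (F b := RInt g 0 b).
  assert (HF : forall x, is_derive F x (g x)) by (intro; now apply is_derive_RInt_0).
  assert (Hgap := antiderivative_gap g F s C ltac:(lra) HF (fun y => proj2 (Hbnd y))).
  assert (Hincr : forall a b, a <= b -> F a <= F b)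
    by (intros a b Hab; apply (derive_nonneg_le F g a b HF Hab); intros; apply Hbnd).
  assert (Hdom : forall t, 0 <= C * exp (s * t) / s).
  { intro t. assert (0 <= C) by (specialize (Hbnd 0); rewrite Rmult_0_r, exp_0 in Hbnd; lra).
    apply Rmult_le_pos; [apply Rmult_le_pos; [lra | left; apply exp_pos] |].
    left. now apply Rinv_0_lt_compat. }
  destruct (nondecreasing_bounded_is_lim_m_infty F (F 0 - C / s) Hincr) as [l [Hl Hle]].
  { intro a. destruct (Rle_or_lt a 0) as [Ha|Ha].
    - specialize (Hgap a 0 Ha). specialize (Hdom a).
      rewrite Rmult_0_r, exp_0, Rmult_1_r in Hgap. lra.
    - specialize (Hincr 0 a (Rlt_le _ _ Ha)). specialize (Hdom 0).
      rewrite Rmult_0_r, exp_0, Rmult_1_r in Hdom. lra. }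
  exists (fun x => F x - l). split; [|split].
  - intro x. apply (is_RInt_gen_antiderivative g F); [exact Hg | exact HF | exact Hl |].
    apply filterlim_at_point_self.
  - intro x. replace (g x) with (g x - 0) by ring.
    apply (is_derive_minus F (fun _ => l));
      [apply HF | apply (@is_derive_const R_AbsRing R_NormedModule)].
  - intro x. split; [specialize (Hle x); lra|].
    assert (Hlim : Rbar_le (F x - C * exp (s * x) / s) l).
    { apply (is_lim_le_loc (fun _ => F x - C * exp (s * x) / s) F m_infty);
        [| apply is_lim_const | exact Hl].
      exists x. intros a Ha. specialize (Hgap a x (Rlt_le _ _ Ha)). specialize (Hdom a). lra. }
    simpl in Hlim. lra.
Qed.

Lemma tail_integral_right (g : R -> R) s C :
  0 < s -> (forall y, continuous g y) -> (forall y, 0 <= g y <= C * exp (- s * y)) ->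
  exists B : R -> R,
    (forall x, is_RInt_gen g (at_point x) (Rbar_locally p_infty) (B x)) /\
    (forall x, is_derive B x (- g x)) /\ (forall x, 0 <= B x <= C * exp (- s * x) / s).
Proof.
  intros Hs Hg Hbnd. set (F b := RInt g 0 b).
  assert (HF : forall x, is_derive F x (g x)) by (intro; now apply is_derive_RInt_0).
  assert (Hgap : forall a b, a <= b ->
    F b - F a <= C * exp (- s * a) / s - C * exp (- s * b) / s).
  { intros a b Hab.
    assert (H := antiderivative_gap g F (- s) C ltac:(lra) HF (fun y => proj2 (Hbnd y)) a b Hab).
    replace (C * exp (- s * a) / s - C * exp (- s * b) / s)
      with (C * exp (- s * b) / - s - C * exp (- s * a) / - s) by (field; lra).
    exact H. }
  assert (Hincr : forall a b, a <= b -> F a <= F b)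
    by (intros a b Hab; apply (derive_nonneg_le F g a b HF Hab); intros; apply Hbnd).
  assert (Hdom : forall t, 0 <= C * exp (- s * t) / s).
  { intro t. assert (0 <= C) by (specialize (Hbnd 0); rewrite Rmult_0_r, exp_0 in Hbnd; lra).
    apply Rmult_le_pos; [apply Rmult_le_pos; [lra | left; apply exp_pos] |].
    left. now apply Rinv_0_lt_compat. }
  destruct (nondecreasing_bounded_is_lim_p_infty F (F 0 + C / s) Hincr) as [l [Hl Hle]].
  { intro b. destruct (Rle_or_lt 0 b) as [Hb|Hb].
    - specialize (Hgap 0 b Hb). specialize (Hdom b).
      rewrite Rmult_0_r, exp_0, Rmult_1_r in Hgap. lra.
    - specialize (Hincr b 0 (Rlt_le _ _ Hb)). specialize (Hdom 0).
      rewrite Rmult_0_r, exp_0, Rmult_1_r in Hdom. lra. }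
  exists (fun x => l - F x). split; [|split].
  - intro x. apply (is_RInt_gen_antiderivative g F); [exact Hg | exact HF | | exact Hl].
    apply filterlim_at_point_self.
  - intro x. replace (- g x) with (0 - g x) by ring.
    apply (is_derive_minus (fun _ => l) F);
      [apply (@is_derive_const R_AbsRing R_NormedModule) | apply HF].
  - intro x. split; [specialize (Hle x); lra|].
    assert (Hlim : Rbar_le l (F x + C * exp (- s * x) / s)).
    { apply (is_lim_le_loc F (fun _ => F x + C * exp (- s * x) / s) p_infty);
        [| exact Hl | apply is_lim_const].
      exists x. intros b Hb. specialize (Hgap x b (Rlt_le _ _ Hb)). specialize (Hdom b). lra. }
    simpl in Hlim. lra.
Qed.

Lemma Psi_split nu mu (u : R -> R) x a b :
  is_RInt_gen (fun y => exp (sqrt nu * y) * u y) (Rbar_locally m_infty) (at_point x) a ->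
  is_RInt_gen (fun y => exp (- sqrt nu * y) * u y) (at_point x) (Rbar_locally p_infty) b ->
  Psi nu mu u x = mu / (2 * sqrt nu) * (exp (- sqrt nu * x) * a + exp (sqrt nu * x) * b).
Proof.
  intros Ha Hb. unfold Psi. f_equal. set (s := sqrt nu) in *.
  apply (@is_RInt_gen_unique R_CompleteNormedModule);
    [apply Proper_StrongProper, Rbar_locally_filter .. |].
  replace (exp (- s * x) * a + exp (s * x) * b)
    with (plus (scal (exp (- s * x)) a) (scal (exp (s * x)) b)) by reflexivity.
  apply (is_RInt_gen_Chasles _ x).
  - assert (Hscal := @is_RInt_gen_scal R_NormedModule _ _ _ _ _ (exp (- s * x)) a Ha).
    eapply (@is_RInt_gen_ext R_NormedModule); [| | | exact Hscal];
      [exact (@filter_filter _ _ (Rbar_locally_filter _))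
      | exact (@filter_filter _ _ (at_point_filter _)) |].
    apply (Filter_prod _ _ _ (fun a => a < x) (fun b => b = x));
      [exists x; intros y Hy; exact Hy | reflexivity |].
    intros a' b' Ha' -> y Hy. simpl in Hy.
    rewrite Rmin_left, Rmax_right in Hy by lra.
    rewrite Rabs_right by lra. unfold scal; simpl; unfold mult; simpl.
    rewrite <- Rmult_assoc, <- exp_plus. f_equal. f_equal. ring.
  - assert (Hscal := @is_RInt_gen_scal R_NormedModule _ _ _ _ _ (exp (s * x)) b Hb).
    eapply (@is_RInt_gen_ext R_NormedModule); [| | | exact Hscal];
      [exact (@filter_filter _ _ (at_point_filter _))
      | exact (@filter_filter _ _ (Rbar_locally_filter _)) |].
    apply (Filter_prod _ _ _ (fun a => a = x) (fun b => x < b));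
      [reflexivity | exists x; intros y Hy; exact Hy |].
    intros a' b' -> Hb' y Hy. simpl in Hy.
    rewrite Rmin_left, Rmax_right in Hy by lra.
    rewrite Rabs_left by lra. unfold scal; simpl; unfold mult; simpl.
    rewrite <- Rmult_assoc, <- exp_plus. f_equal. f_equal. ring.
Qed.

Lemma continuous_exp_mult k (u : R -> R) y :
  continuous u y -> continuous (fun t => exp (k * t) * u t) y.
Proof.
  intro Hu.
  apply (@continuous_mult R_UniformSpace R_AbsRing (fun t => exp (k * t)) u); [|exact Hu].
  apply (@ex_derive_continuous R_AbsRing R_NormedModule). auto_derive. exact I.
Qed.

Lemma Psi_derivable_bounded nu mu (u : R -> R) R0 :
  0 < nu -> 0 < mu -> (forall y, continuous u y) -> (forall y, 0 <= u y <= R0) ->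
  (forall x, ex_derive (Psi nu mu u) x) /\ (forall x, 0 <= Psi nu mu u x <= mu * R0 / nu).
Proof.
  intros Hnu Hmu Hu Hbnd. set (s := sqrt nu).
  assert (Hs : 0 < s) by (apply sqrt_lt_R0; lra).
  destruct (tail_integral_left (fun y => exp (s * y) * u y) s R0 Hs)
    as [A [HA [HdA HbA]]].
  { intro y. now apply continuous_exp_mult. }
  { intro y. specialize (Hbnd y). pose proof (exp_pos (s * y)). split; nra. }
  destruct (tail_integral_right (fun y => exp (- s * y) * u y) s R0 Hs)
    as [B [HB [HdB HbB]]].
  { intro y. now apply continuous_exp_mult. }
  { intro y. specialize (Hbnd y). pose proof (exp_pos (- s * y)). split; nra. }
  assert (Hform : forall x,
    Psi nu mu u x = mu / (2 * s) * (exp (- s * x) * A x + exp (s * x) * B x))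
    by (intro x; apply Psi_split; [apply HA | apply HB]).
  split.
  - intro x.
    apply (ex_derive_ext (fun t => mu / (2 * s) * (exp (- s * t) * A t + exp (s * t) * B t)));
      [intro t; symmetry; apply Hform|].
    auto_derive. repeat split; eexists; [apply HdA | apply HdB].
  - intro x. rewrite Hform.
    assert (HeA : 0 <= exp (- s * x) * A x <= R0 / s).
    { specialize (HbA x). pose proof (exp_pos (- s * x)).
      replace (R0 / s) with (exp (- s * x) * (R0 * exp (s * x) / s))
        by (rewrite <- (Rmult_1_l (R0 / s)), <- (exp_opp_mul_inv s x); field; lra).
      split; [|apply Rmult_le_compat_l]; nra. }
    assert (HeB : 0 <= exp (s * x) * B x <= R0 / s).
    { specialize (HbB x). pose proof (exp_pos (s * x)).
      replace (R0 / s) with (exp (s * x) * (R0 * exp (- s * x) / s))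
        by (rewrite <- (Rmult_1_l (R0 / s)), <- (exp_opp_mul_inv s x); field; lra).
      split; [|apply Rmult_le_compat_l]; nra. }
    replace (mu * R0 / nu) with (mu / (2 * s) * (R0 / s + R0 / s))
      by (rewrite <- (sqrt_sqrt nu) by lra; fold s; field; lra).
    assert (0 < mu / (2 * s)) by (apply Rdiv_lt_0_compat; lra).
    split; [apply Rmult_le_pos | apply Rmult_le_compat_l]; lra.
Qed.

(** * Positivity of nonnegative solutions *)

Section Positivity.

Variables (p P Q w : R -> R) (c Bd MQ : R).
Hypothesis P_derive : forall x, is_derive P x (p x).
Hypothesis P_bounds : forall x, c * x - Bd <= P x <= c * x.
Hypothesis w_d1 : forall x, ex_derive w x.
Hypothesis w_d2 : forall x, ex_derive (Derive w) x.
Hypothesis w_eq : forall x, Derive (Derive w) x + p x * Derive w x + Q x * w x = 0.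
Hypothesis Q_bound : forall x, Rabs (Q x) <= MQ.
Hypothesis w_nonneg : forall x, 0 <= w x.

Lemma is_derive_flux x :
  is_derive (fun t => exp (P t) * Derive w t) x (- (exp (P x) * Q x * w x)).
Proof.
  auto_derive.
  - repeat split; auto. now exists (p x).
  - change (fun t => P t) with P. change (fun t => Derive w t) with (Derive w).
    rewrite (is_derive_unique P x (p x) (P_derive x)).
    specialize (w_eq x). nra.
Qed.

Lemma exp_P_oscillation eta xi :
  Rabs (eta - xi) <= 1 -> exp (P eta) * exp (- P xi) <= exp (Rabs c + Bd).
Proof.
  intro Hclose. rewrite <- exp_plus. apply exp_le_compat.
  assert (c * (eta - xi) <= Rabs c)
    by (eapply Rle_trans; [apply Rle_abs | rewrite Rabs_mult; pose proof (Rabs_pos c); nra]).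
  pose proof (P_bounds eta). pose proof (P_bounds xi). lra.
Qed.

Lemma zero_propagates_right : exists h, 0 < h /\ forall x0, w x0 = 0 -> w (x0 + h) = 0.
Proof.
  set (C0 := exp (Rabs c + Bd) * MQ).
  assert (HC0 : 0 <= C0).
  { apply Rmult_le_pos; [left; apply exp_pos|].
    eapply Rle_trans; [apply Rabs_pos | apply (Q_bound 0)]. }
  set (h := / (2 * (C0 + 1))).
  assert (Hh : 0 < h) by (apply Rinv_0_lt_compat; lra).
  assert (Hh_inv : h * (2 * (C0 + 1)) = 1) by (unfold h; field; lra).
  assert (Hh1 : h <= 1) by nra.
  assert (HhC0 : h * h * C0 <= / 2) by nra.
  exists h. split; [exact Hh|]. intros x0 Hx0.
  assert (Hd0 : Derive w x0 = 0).
  { apply (is_derive_min_eq_0 w x0); [apply Derive_correct, w_d1|].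
    intro y. rewrite Hx0. apply w_nonneg. }
  (* Two mean value steps from [x0], where [w] and [w'] vanish, bound the maximum
     [w m] on [[x0, x0 + h]] by [C0 h^2 w m <= w m / 2]. *)
  destruct (continuity_ab_maj w x0 (x0 + h)) as [m [Hmax Hm]];
    [lra | intros t _; apply ex_derive_continuity_pt, w_d1 |].
  destruct (MVT_is_derive_le w (Derive w) x0 m) as [xi [Hxi Exi]];
    [intro t; apply Derive_correct, w_d1 | lra |].
  destruct (MVT_is_derive_le _ _ x0 xi is_derive_flux) as [eta [Heta Eeta]]; [lra|].
  assert (Hwm : w m = - (exp (P eta) * exp (- P xi)) * Q eta * w eta * (xi - x0) * (m - x0)).
  { rewrite Hx0, Hd0, Rmult_0_r, !Rminus_0_r in *. rewrite Exi, exp_Ropp.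
    replace (Derive w xi) with (/ exp (P xi) * (exp (P xi) * Derive w xi))
      by (field; apply Rgt_not_eq, exp_pos).
    rewrite Eeta. ring. }
  assert (Hbound : w m <= exp (Rabs c + Bd) * MQ * w m * h * h).
  { eapply Rle_trans; [apply Rle_abs|]. rewrite Hwm at 1. rewrite !Rabs_mult, Rabs_Ropp.
    repeat apply Rmult_le_compat; try (repeat apply Rmult_le_pos; apply Rabs_pos); auto.
    - rewrite Rabs_right by (left; apply Rmult_lt_0_compat; apply exp_pos).
      apply exp_P_oscillation. apply Rabs_le. lra.
    - rewrite Rabs_right by apply Rle_ge, w_nonneg. apply Hmax. lra.
    - rewrite Rabs_right; lra.
    - rewrite Rabs_right; lra. }
  assert (w m <= 0).
  { assert (0 <= w m) by apply w_nonneg. fold C0 in Hbound. nra. }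
  assert (w (x0 + h) <= w m) by (apply Hmax; lra).
  pose proof (w_nonneg (x0 + h)). lra.
Qed.

Lemma nonneg_sol_pos : (exists T, forall x, T <= x -> 0 < w x) -> forall x, 0 < w x.
Proof.
  intros [T HT] x. destruct (w_nonneg x) as [|Hx0]; [assumption|]. exfalso.
  destruct zero_propagates_right as [h [Hh Hprop]].
  assert (Hzero : forall n, w (x + INR n * h) = 0).
  { induction n as [|n IH].
    - simpl. rewrite Rmult_0_l, Rplus_0_r. auto.
    - rewrite S_INR. replace (x + (INR n + 1) * h) with (x + INR n * h + h) by ring.
      now apply Hprop. }
  destruct (INR_archimed h (T - x) Hh) as [n Hn].
  specialize (Hzero n). assert (0 < w (x + INR n * h)) by (apply HT; lra). lra.
Qed.

End Positivity.

(** * Comparison of positive solutions *)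

Definition ode_sol (p q : R -> R) (beta : R) (V : R -> R) : Prop :=
  (forall x, ex_derive V x) /\ (forall x, ex_derive (Derive V) x) /\
  (forall x, Derive (Derive V) x + p x * Derive V x + (q x - beta * V x) * V x = 0).

Definition wronskian (P V1 V2 : R -> R) (x : R) : R :=
  exp (P x) * (Derive V1 x * V2 x - V1 x * Derive V2 x).

Lemma wronskian_swap P V1 V2 x : wronskian P V2 V1 x = - wronskian P V1 V2 x.
Proof. unfold wronskian. ring. Qed.

Lemma is_derive_ratio (P V1 V2 : R -> R) x :
  ex_derive V1 x -> ex_derive V2 x -> V2 x <> 0 ->
  is_derive (fun t => V1 t / V2 t) x (wronskian P V1 V2 x * (exp (- P x) / V2 x ^ 2)).
Proof.
  intros H1 H2 H0.
  replace (wronskian P V1 V2 x * (exp (- P x) / V2 x ^ 2))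
    with ((Derive V1 x * V2 x - V1 x * Derive V2 x) / V2 x ^ 2).
  - apply is_derive_div; [apply Derive_correct, H1 | apply Derive_correct, H2 | exact H0].
  - unfold wronskian. rewrite exp_Ropp. field. split; [apply Rgt_not_eq, exp_pos | exact H0].
Qed.

Section Comparison.

Variables (p q P : R -> R) (beta c Bd : R).
Hypothesis beta_pos : 0 < beta.
Hypothesis P_derive : forall x, is_derive P x (p x).
Hypothesis P_bounds : forall x, c * x - Bd <= P x <= c * x.

Lemma ratio_weight_lb (V : R -> R) B t :
  0 < V t -> V t <= B -> exp (- (c * t)) / B ^ 2 <= exp (- P t) / V t ^ 2.
Proof.
  intros HV HB.
  apply Rmult_le_compat; [left; apply exp_pos | left; apply Rinv_0_lt_compat, pow_lt; lra | |].
  - apply exp_le_compat. specialize (P_bounds t). lra.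
  - apply Rinv_le_contravar; [apply pow_lt; lra | apply pow_incr; lra].
Qed.

Variables V1 V2 : R -> R.
Hypothesis V1_sol : ode_sol p q beta V1.
Hypothesis V2_sol : ode_sol p q beta V2.
Hypothesis V1_pos : forall x, 0 < V1 x.
Hypothesis V2_pos : forall x, 0 < V2 x.

Lemma is_derive_wronskian x :
  is_derive (wronskian P V1 V2) x (exp (P x) * (beta * V1 x * V2 x * (V1 x - V2 x))).
Proof.
  destruct V1_sol as [D1 [DD1 E1]]. destruct V2_sol as [D2 [DD2 E2]].
  unfold wronskian. auto_derive.
  - repeat split; auto. now exists (p x).
  - change (fun t => P t) with P. change (fun t => V1 t) with V1.
    change (fun t => V2 t) with V2. change (fun t => Derive V1 t) with (Derive V1).
    change (fun t => Derive V2 t) with (Derive V2).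
    rewrite (is_derive_unique P x (p x) (P_derive x)).
    specialize (E1 x). specialize (E2 x). nra.
Qed.

Lemma is_derive_ratio_sol x :
  is_derive (fun t => V1 t / V2 t) x (wronskian P V1 V2 x * (exp (- P x) / V2 x ^ 2)).
Proof. apply is_derive_ratio; [apply V1_sol | apply V2_sol | apply Rgt_not_eq, V2_pos]. Qed.

Lemma ratio_gt_1 x : 1 < V1 x / V2 x <-> V2 x < V1 x.
Proof.
  pose proof (V2_pos x) as HV2. split; intro H.
  - apply (Rmult_lt_compat_r (V2 x)) in H; [|exact HV2]. field_simplify in H; lra.
  - apply (Rmult_lt_reg_r (V2 x)); [exact HV2|]. field_simplify; lra.
Qed.

Lemma wronskian_derive_nonneg t :
  1 < V1 t / V2 t -> 0 <= exp (P t) * (beta * V1 t * V2 t * (V1 t - V2 t)).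
Proof.
  intro Ht. apply ratio_gt_1 in Ht.
  assert (0 < beta * V1 t * V2 t) by (repeat apply Rmult_lt_0_compat; auto).
  left. apply Rmult_lt_0_compat; [apply exp_pos | apply Rmult_lt_0_compat; lra].
Qed.

Lemma crossing_spreads_right y :
  V2 y < V1 y -> 0 <= wronskian P V1 V2 y -> forall x, y <= x ->
  V1 y / V2 y <= V1 x / V2 x /\ wronskian P V1 V2 y <= wronskian P V1 V2 x.
Proof.
  intros Hy HWy.
  assert (Habove := stays_above_right _ _ _ _ is_derive_ratio_sol is_derive_wronskian
    (fun t => Rdiv_lt_0_compat _ _ (exp_pos _) (pow_lt _ 2 (V2_pos t)))
    wronskian_derive_nonneg y (proj2 (ratio_gt_1 y) Hy) HWy).
  intros x Hx. split; [now apply Habove|].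
  apply (derive_nonneg_le _ _ y x is_derive_wronskian Hx).
  intros t Ht. apply wronskian_derive_nonneg.
  assert (V1 y / V2 y <= V1 t / V2 t) by (apply Habove; lra).
  assert (1 < V1 y / V2 y) by now apply ratio_gt_1. lra.
Qed.

Lemma crossing_spreads_left y :
  V2 y < V1 y -> wronskian P V1 V2 y <= 0 -> forall x, x <= y ->
  V1 y / V2 y <= V1 x / V2 x /\ wronskian P V1 V2 x <= wronskian P V1 V2 y.
Proof.
  intros Hy HWy.
  assert (Habove := stays_above_left _ _ _ _ is_derive_ratio_sol is_derive_wronskian
    (fun t => Rdiv_lt_0_compat _ _ (exp_pos _) (pow_lt _ 2 (V2_pos t)))
    wronskian_derive_nonneg y (proj2 (ratio_gt_1 y) Hy) HWy).
  intros x Hx. split; [now apply Habove|].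
  apply (derive_nonneg_le _ _ x y is_derive_wronskian Hx).
  intros t Ht. apply wronskian_derive_nonneg.
  assert (V1 y / V2 y <= V1 t / V2 t) by (apply Habove; lra).
  assert (1 < V1 y / V2 y) by now apply ratio_gt_1. lra.
Qed.

Lemma shift_lower_bound x t : x - 1 < t < x -> c * x - Rabs c <= c * t.
Proof.
  intro Ht. destruct (Rcase_abs c) as [Hc|Hc];
    [rewrite Rabs_left | rewrite Rabs_right]; try assumption; nra.
Qed.

Lemma wronskian_derive_lb K z0 t :
  0 <= K -> 1 <= z0 -> K <= V2 t -> z0 <= V1 t / V2 t ->
  exp (- Bd) * beta * K ^ 3 * (z0 * (z0 - 1)) * exp (c * t) <=
    exp (P t) * (beta * V1 t * V2 t * (V1 t - V2 t)).
Proof.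
  intros HK Hz0 HV2 Hzt. set (zt := V1 t / V2 t) in *.
  assert (Hexp : exp (c * t) * exp (- Bd) <= exp (P t))
    by (rewrite <- exp_plus; apply exp_le_compat; specialize (P_bounds t); lra).
  assert (Hcube : K ^ 3 <= V2 t ^ 3) by (apply pow_incr; lra).
  replace (beta * V1 t * V2 t * (V1 t - V2 t)) with (beta * V2 t ^ 3 * (zt * (zt - 1)))
    by (unfold zt; field; apply Rgt_not_eq, V2_pos).
  replace (exp (- Bd) * beta * K ^ 3 * (z0 * (z0 - 1)) * exp (c * t))
    with (exp (c * t) * exp (- Bd) * (beta * K ^ 3 * (z0 * (z0 - 1)))) by ring.
  apply Rmult_le_compat; try lra.
  - apply Rmult_le_pos; left; apply exp_pos.
  - apply Rmult_le_pos; [apply Rmult_le_pos; [lra | apply pow_le; lra] | nra].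
  - apply Rmult_le_compat; [apply Rmult_le_pos; [lra | apply pow_le; lra] | nra | | nra].
    apply Rmult_le_compat_l; lra.
Qed.

Lemma wronskian_exp_growth y K T :
  V2 y < V1 y -> 0 <= wronskian P V1 V2 y -> 0 < K -> (forall x, T <= x -> K <= V2 x) ->
  exists kappa T2, 0 < kappa /\
    forall x, T2 <= x -> kappa * exp (c * x) <= wronskian P V1 V2 x.
Proof.
  intros Hy HWy HK HV2K.
  assert (Hspread := crossing_spreads_right y Hy HWy).
  set (z0 := V1 y / V2 y). assert (Hz0 : 1 < z0) by now apply ratio_gt_1.
  set (delta := exp (- Bd) * beta * K ^ 3 * (z0 * (z0 - 1))).
  assert (Hdelta : 0 < delta).
  { unfold delta. apply Rmult_lt_0_compat; [|apply Rmult_lt_0_compat; lra].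
    apply Rmult_lt_0_compat; [|apply pow_lt; lra].
    apply Rmult_lt_0_compat; [apply exp_pos | lra]. }
  (* One mean value step over [[x - 1, x]] turns [W' >= delta e^(c t)] into
     [W x >= W (x - 1) + delta e^(c x - |c|)], and [W (x - 1) >= W y >= 0]. *)
  exists (delta * exp (- Rabs c)), (Rmax T y + 1). split.
  { apply Rmult_lt_0_compat; [exact Hdelta | apply exp_pos]. }
  intros x Hx.
  assert (Hincr := derive_ge_increment _ _ (delta * exp (c * x - Rabs c)) (x - 1) x
    is_derive_wronskian ltac:(lra)).
  assert (HWx1 : wronskian P V1 V2 y <= wronskian P V1 V2 (x - 1))
    by (apply Hspread; assert (y <= Rmax T y) by apply Rmax_r; lra).
  replace (delta * exp (- Rabs c) * exp (c * x)) with (delta * exp (c * x - Rabs c))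
    by (unfold Rminus; rewrite exp_plus; ring).
  enough (delta * exp (c * x - Rabs c) * (x - (x - 1)) <= wronskian P V1 V2 x) by lra.
  transitivity (wronskian P V1 V2 (x - 1) + delta * exp (c * x - Rabs c) * (x - (x - 1)));
    [lra|].
  apply Hincr. intros t Ht.
  assert (HTy : T <= t /\ y <= t) by (pose proof (Rmax_l T y); pose proof (Rmax_r T y); lra).
  eapply Rle_trans;
    [| apply (wronskian_derive_lb K z0 t); [lra | lra | apply HV2K, HTy | apply Hspread, HTy]].
  apply Rmult_le_compat_l; [left; exact Hdelta|]. apply exp_le_compat, shift_lower_bound, Ht.
Qed.

Lemma no_crossing_right R0 K T y :
  0 < K -> (forall x, V1 x <= R0) -> (forall x, V2 x <= R0) ->
  (forall x, T <= x -> K <= V2 x) -> V2 y < V1 y -> 0 <= wronskian P V1 V2 y -> False.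
Proof.
  intros HK HV1 HV2 HV2K Hy HWy.
  destruct (wronskian_exp_growth y K T Hy HWy HK HV2K) as [kappa [T2 [Hkappa HW]]].
  assert (HR0 : 0 < R0) by (specialize (V1_pos 0); specialize (HV1 0); lra).
  set (T3 := Rmax T T2). set (m := kappa / R0 ^ 2).
  assert (Hm : 0 < m) by (apply Rdiv_lt_0_compat; [lra | apply pow_lt; lra]).
  assert (Hslope : forall t, T3 <= t ->
    m <= wronskian P V1 V2 t * (exp (- P t) / V2 t ^ 2)).
  { intros t Ht.
    assert (HWt : kappa * exp (c * t) <= wronskian P V1 V2 t)
      by (apply HW; eapply Rle_trans; [apply Rmax_r | exact Ht]).
    replace m with (kappa * exp (c * t) * (exp (- (c * t)) / R0 ^ 2))
      by (unfold m; rewrite exp_Ropp; field; split; apply Rgt_not_eq; (apply exp_pos || lra)).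
    apply Rmult_le_compat; try assumption.
    - left. apply Rmult_lt_0_compat; [lra | apply exp_pos].
    - left. apply Rdiv_lt_0_compat; [apply exp_pos | apply pow_lt; lra].
    - apply ratio_weight_lb; [apply V2_pos | apply HV2]. }
  set (x := T3 + R0 / (K * m) + 1).
  assert (Hx : T3 <= x).
  { assert (0 < R0 / (K * m)) by (apply Rdiv_lt_0_compat; [lra | apply Rmult_lt_0_compat; lra]).
    unfold x. lra. }
  assert (Hgrowth := derive_ge_increment _ _ m T3 x is_derive_ratio_sol Hx
    (fun t Ht => Hslope t (Rlt_le _ _ (proj1 Ht)))).
  assert (HzT3 : 0 < V1 T3 / V2 T3) by (apply Rdiv_lt_0_compat; [apply V1_pos | apply V2_pos]).
  assert (Hzx : V1 x / V2 x <= R0 / K).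
  { assert (K <= V2 x) by (apply HV2K; eapply Rle_trans; [apply Rmax_l | exact Hx]).
    unfold Rdiv.
    apply Rmult_le_compat;
      [left; apply V1_pos | left; apply Rinv_0_lt_compat, V2_pos | apply HV1 |].
    apply Rinv_le_contravar; lra. }
  assert (m * (x - T3) = R0 / K + m) by (unfold x; field; lra).
  lra.
Qed.

Lemma no_crossing_left C th y :
  0 < c + 2 * th -> (forall x, V1 x <= C * exp (th * x)) ->
  V2 y < V1 y -> wronskian P V1 V2 y < 0 -> False.
Proof.
  intros Hlam HV1 Hy HWy.
  assert (HC : 0 < C).
  { specialize (V1_pos 0). specialize (HV1 0). rewrite Rmult_0_r, exp_0 in HV1. lra. }
  assert (HWle := fun x Hx => proj2 (crossing_spreads_left y Hy (Rlt_le _ _ HWy) x Hx)).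
  set (m := - wronskian P V1 V2 y * exp (- ((c + 2 * th) * y)) / C ^ 2).
  assert (Hm : 0 < m).
  { apply Rdiv_lt_0_compat; [apply Rmult_lt_0_compat; [lra | apply exp_pos] | apply pow_lt; lra]. }
  assert (Hslope : forall t, t <= y ->
    m <= wronskian P V2 V1 t * (exp (- P t) / V1 t ^ 2)).
  { intros t Ht. rewrite wronskian_swap.
    assert (Ha : exp (- ((c + 2 * th) * y)) / C ^ 2 <= exp (- P t) / V1 t ^ 2).
    { eapply Rle_trans; [|apply (ratio_weight_lb V1 _ t (V1_pos t) (HV1 t))].
      replace (exp (- (c * t)) / (C * exp (th * t)) ^ 2)
        with (exp (- ((c + 2 * th) * t)) / C ^ 2)
        by (rewrite !exp_Ropp; replace ((c + 2 * th) * t) with (c * t + th * t + th * t) by ring;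
            rewrite !exp_plus; field; repeat split; apply Rgt_not_eq; (apply exp_pos || lra)).
      apply Rmult_le_compat_r; [left; apply Rinv_0_lt_compat, pow_lt; lra|].
      apply exp_le_compat. nra. }
    unfold m, Rdiv in *. rewrite Rmult_assoc. apply Rmult_le_compat; try lra.
    - left. apply Rmult_lt_0_compat; [apply exp_pos | apply Rinv_0_lt_compat, pow_lt; lra].
    - specialize (HWle t Ht). lra. }
  set (x := y - V2 y / V1 y / m - 1).
  assert (Hx : x <= y).
  { assert (0 < V2 y / V1 y / m)
      by (apply Rdiv_lt_0_compat; [apply Rdiv_lt_0_compat; [apply V2_pos | apply V1_pos] | lra]).
    unfold x. lra. }
  assert (Hderiv : forall t, is_derive (fun s => V2 s / V1 s) t
                     (wronskian P V2 V1 t * (exp (- P t) / V1 t ^ 2))).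
  { intro t. apply is_derive_ratio; [apply V2_sol | apply V1_sol | apply Rgt_not_eq, V1_pos]. }
  assert (Hgrowth := derive_ge_increment _ _ m x y Hderiv Hx
    (fun t Ht => Hslope t (Rlt_le _ _ (proj2 Ht)))).
  assert (Hwx : 0 < V2 x / V1 x) by (apply Rdiv_lt_0_compat; [apply V2_pos | apply V1_pos]).
  assert (m * (y - x) = V2 y / V1 y + m) by (pose proof (V1_pos y); unfold x; field; lra).
  lra.
Qed.

Lemma ode_sol_le R0 K T C th :
  0 < K -> 0 < c + 2 * th -> (forall x, V1 x <= R0) -> (forall x, V2 x <= R0) ->
  (forall x, T <= x -> K <= V2 x) -> (forall x, V1 x <= C * exp (th * x)) ->
  forall x, V1 x <= V2 x.
Proof.
  intros HK Hlam HV1 HV2 HV2K HV1exp x. apply Rnot_lt_le. intro Hx.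
  destruct (Rle_or_lt 0 (wronskian P V1 V2 x)) as [HW|HW].
  - exact (no_crossing_right R0 K T x HK HV1 HV2 HV2K Hx HW).
  - exact (no_crossing_left C th x Hlam HV1exp Hx HW).
Qed.

End Comparison.

Section Elliptic.

Variables (c chi nu mu b : R) (r u : R -> R) (R0 : R).
Hypothesis chi_pos : 0 < chi.
Hypothesis nu_pos : 0 < nu.
Hypothesis mu_pos : 0 < mu.
Hypothesis beta_pos : 0 < b - chi * mu.
Hypothesis u_cont : forall y, continuous u y.
Hypothesis u_bounds : forall y, 0 <= u y <= R0.

Lemma drift_derive x :
  is_derive (fun t => c * t - chi * Psi nu mu u t) x (c - chi * Psi_x nu mu u x).
Proof.
  destruct (Psi_derivable_bounded nu mu u R0 nu_pos mu_pos u_cont u_bounds) as [Hd _].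
  apply (is_derive_minus (fun t => c * t)); [auto_derive; [exact I | ring]|].
  apply (is_derive_scal (Psi nu mu u)), Derive_correct, Hd.
Qed.

Lemma drift_bounds x :
  c * x - chi * (mu * R0 / nu) <= c * x - chi * Psi nu mu u x <= c * x.
Proof.
  destruct (Psi_derivable_bounded nu mu u R0 nu_pos mu_pos u_cont u_bounds) as [_ Hb].
  specialize (Hb x). split; nra.
Qed.

(* [Aop c chi nu mu b r u V x] is, up to conversion, the left-hand side of [ode_sol]
   with [p x = c - chi * Psi_x nu mu u x], [q x = r x - chi * nu * Psi nu mu u x] and
   [beta = b - chi * mu], so elliptic solutions are passed on without rewriting. *)

Lemma elliptic_sol_pos Mr K T V :
  (forall x, Rabs (r x) <= Mr) -> elliptic_sol c chi nu mu b r u V ->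
  (forall x, 0 <= V x <= R0) -> (forall x, T <= x -> K <= V x) -> 0 < K ->
  forall x, 0 < V x.
Proof.
  intros HMr [Vd1 [Vd2 Veq]] HV HVK HK.
  destruct (Psi_derivable_bounded nu mu u R0 nu_pos mu_pos u_cont u_bounds) as [_ HPsi].
  apply (nonneg_sol_pos (fun x => c - chi * Psi_x nu mu u x) (fun t => c * t - chi * Psi nu mu u t)
    (fun x => r x - chi * nu * Psi nu mu u x - (b - chi * mu) * V x) V c (chi * (mu * R0 / nu))
    (Mr + chi * nu * (mu * R0 / nu) + (b - chi * mu) * R0)
    drift_derive drift_bounds Vd1 Vd2 Veq).
  - intro x. specialize (HMr x). specialize (HPsi x). specialize (HV x).
    apply Rabs_le. apply Rabs_le_between in HMr.
    assert (0 <= chi * nu * Psi nu mu u x <= chi * nu * (mu * R0 / nu))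
      by (split; [apply Rmult_le_pos | apply Rmult_le_compat_l]; nra).
    assert (0 <= (b - chi * mu) * V x <= (b - chi * mu) * R0)
      by (split; [apply Rmult_le_pos | apply Rmult_le_compat_l]; lra).
    lra.
  - intro x. apply HV.
  - exists T. intros x Hx. specialize (HVK x Hx). lra.
Qed.

Lemma elliptic_sol_le K T C th V1 V2 :
  0 < K -> 0 < c + 2 * th ->
  elliptic_sol c chi nu mu b r u V1 -> elliptic_sol c chi nu mu b r u V2 ->
  (forall x, 0 < V1 x) -> (forall x, 0 < V2 x) ->
  (forall x, V1 x <= R0) -> (forall x, V2 x <= R0) ->
  (forall x, T <= x -> K <= V2 x) -> (forall x, V1 x <= C * exp (th * x)) ->
  forall x, V1 x <= V2 x.
Proof.
  intros HK Hth HV1 HV2 HV1pos HV2pos.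
  exact (ode_sol_le (fun x => c - chi * Psi_x nu mu u x) (fun x => r x - chi * nu * Psi nu mu u x)
    (fun t => c * t - chi * Psi nu mu u t) (b - chi * mu) c (chi * (mu * R0 / nu))
    beta_pos drift_derive drift_bounds V1 V2 HV1 HV2 HV1pos HV2pos R0 K T C th HK Hth).
Qed.

End Elliptic.

Lemma Cb_unif_continuous (u : R -> R) : Cb_unif u -> forall y, continuous u y.
Proof.
  intros [_ Hu] y. apply filterlim_locally. intro eps.
  destruct (Hu eps (cond_pos eps)) as [d [Hd Hclose]].
  exists (mkposreal d Hd). intros z Hz. exact (Hclose z y Hz).
Qed.

Lemma wave_plateau_pos rstar eps chi mu b :
  0 < chi * mu -> b > 2 * chi * mu -> 0 < eps < rstar * (b - 2 * chi * mu) / (b - chi * mu) ->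
  0 < ((rstar - eps) * (b - chi * mu) - chi * mu * rstar) / (b - chi * mu) ^ 2.
Proof.
  intros Hchimu Hb [Heps Heps'].
  apply Rdiv_lt_0_compat; [|apply pow_lt; lra].
  apply (Rmult_lt_compat_r (b - chi * mu)) in Heps'; [|lra].
  unfold Rdiv in Heps'. rewrite Rmult_assoc, Rinv_l, Rmult_1_r in Heps' by lra. nra.
Qed.

Lemma root_speed_pos c theta r1 :
  0 < theta -> theta ^ 2 + c * theta + r1 = 0 -> r1 < 0 -> 0 < c + 2 * theta.
Proof. intros. nra. Qed.

Lemma lower_barrier_eventually (phi : R -> R) K a :
  0 < K -> is_lim phi m_infty K ->
  exists T, forall x, T <= x -> K / 2 <= Rmax (phi (a - x)) 0.
Proof.
  intros HK Hlim. apply is_lim_spec in Hlim.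
  destruct (Hlim (mkposreal (K / 2) ltac:(lra))) as [M HM].
  exists (a - M + 1). intros x Hx.
  assert (Hphi : Rabs (phi (a - x) - K) < K / 2) by (apply HM; lra).
  apply Rabs_def2 in Hphi. eapply Rle_trans; [|apply Rmax_l]. lra.
Qed.

Lemma U1plus_le rstar chi mu b theta1 x1 x :
  U1plus rstar chi mu b theta1 x1 x <= rstar / (b - chi * mu) /\
  U1plus rstar chi mu b theta1 x1 x <=
    rstar / (b - chi * mu) * exp (- theta1 * x1) * exp (theta1 * x).
Proof.
  split; [apply Rmin_l|]. rewrite Rmult_assoc, <- exp_plus.
  replace (- theta1 * x1 + theta1 * x) with (theta1 * (x - x1)) by ring. apply Rmin_r.
Qed.

Lemma E1_envelope rstar chi mu b theta1 x1 (phi : R -> R) a K T (V : R -> R) :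
  (forall x, T <= x -> K / 2 <= Rmax (phi (a - x)) 0) ->
  (forall x, Rmax (phi (a - x)) 0 <= V x <= U1plus rstar chi mu b theta1 x1 x) ->
  (forall x, 0 <= V x <= rstar / (b - chi * mu)) /\ (forall x, T <= x -> K / 2 <= V x) /\
  (forall x, V x <= rstar / (b - chi * mu) * exp (- theta1 * x1) * exp (theta1 * x)).
Proof.
  intros HT HV.
  split; [|split]; intro x; specialize (HV x); pose proof (Rmax_r (phi (a - x)) 0);
    pose proof (U1plus_le rstar chi mu b theta1 x1 x); [lra | | lra].
  intro Hx. specialize (HT x Hx). lra.
Qed.

Theorem lemma3p5
  (chi b nu mu c : R) (r : R -> R) (rminus rstar : R)
  (r1 x1 theta1 eps : R) (phi : R -> R) (ct a x0 : R)
  (* parameters *)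
  (Hchi : 0 < chi) (Hb : 0 < b) (Hnu : 0 < nu) (Hmu : 0 < mu)
  (Hb2 : b > 2 * chi * mu)
  (* r *)
  (Hr_hold : Holder_cont r)
  (Hr_bdd : exists M, forall x, Rabs (r x) <= M)
  (Hr_minus : is_lim r m_infty rminus)
  (Hr_plus : is_lim r p_infty rstar)
  (Hr_sign : rminus < 0 < rstar)
  (Hr_range : forall x, rminus <= r x <= rstar)
  (* speed condition *)
  (Hc : c > chi * mu * rstar / (2 * sqrt nu * (b - chi * mu))
            - 2 * sqrt (rstar * (b - 2 * chi * mu) / (b - chi * mu)))
  (* r1, x1, theta1 *)
  (Hr1 : rminus < r1 < 0)
  (Hx1 : forall x, x <= x1 -> r x <= r1)
  (Htheta1 : 0 < theta1 /\ theta1 ^ 2 + c * theta1 + r1 = 0)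
  (* eps and the decreasing traveling wave (phi, ct) of phi''+ct phi'+f_eps(phi)=0 *)
  (Heps : 0 < eps < rstar * (b - 2 * chi * mu) / (b - chi * mu))
  (Hphi_d1 : forall z, ex_derive phi z)
  (Hphi_d2 : forall z, ex_derive (Derive phi) z)
  (Hphi_eq : forall z, Derive (Derive phi) z + ct * Derive phi z
                       + f_eps rstar eps chi mu b (phi z) = 0)
  (Hphi_dec : forall z w, z < w -> phi w <= phi z)
  (Hphi_minus : is_lim phi m_infty
     (((rstar - eps) * (b - chi * mu) - chi * mu * rstar) / (b - chi * mu) ^ 2))
  (Hphi_plus : is_lim phi p_infty (- eps))
  (Hct : ct > 2 * sqrt (rstar * (b - 2 * chi * mu) / (b - chi * mu))
              - (c - chi * mu * rstar / (2 * sqrt nu * (b - chi * mu))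
                 + 2 * sqrt (rstar * (b - 2 * chi * mu) / (b - chi * mu))) / 2)
  (* psi_eps(x) = phi(a - x), translated so that psi_eps(x0) = 0 *)
  (Hx0 : x0 > x1)
  (Hpsi0 : phi (a - x0) = 0)
  (Hx0r : forall x, x > x0 -> r x >= rstar - eps)
  : let U1p := U1plus rstar chi mu b theta1 x1 in
    let U1m := fun x => Rmax (phi (a - x)) 0 in
    forall (u : R -> R), in_E1 U1m U1p u ->
    forall (U : R -> R -> R) (Ustar : R -> R),
      parabolic_sol c chi nu mu b r u U1p U ->
      (forall x, is_lim (fun t => U t x) p_infty (Ustar x)) ->
      in_E1 U1m U1p Ustar ->
      elliptic_sol c chi nu mu b r u Ustar ->
      (forall x, 0 < Ustar x) /\
      (forall V : R -> R, in_E1 U1m U1p V -> elliptic_sol c chi nu mu b r u V ->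
         (forall x, 0 < V x) -> forall x, V x = Ustar x).
Proof.
  intros U1p U1m u [u_cb u_E1] U Ustar _ _ Ustar_E1 Ustar_sol.
  assert (Hbeta : 0 < b - chi * mu) by nra.
  assert (HK := wave_plateau_pos rstar eps chi mu b ltac:(nra) Hb2 Heps).
  destruct (lower_barrier_eventually phi _ a HK Hphi_minus) as [T HT].
  assert (Henv := fun V HV => E1_envelope rstar chi mu b theta1 x1 phi a _ T V HT HV).
  destruct (Henv u u_E1) as [Hu _].
  assert (Hucont := Cb_unif_continuous u u_cb).
  destruct Hr_bdd as [Mr HMr].
  assert (Hpos : forall V, in_E1 U1m U1p V -> elliptic_sol c chi nu mu b r u V ->
    forall x, 0 < V x).
  { intros V [_ HV] HVsol. destruct (Henv V HV) as [HV0 [HVK _]].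
    exact (elliptic_sol_pos c chi nu mu b r u _ Hchi Hnu Hmu Hbeta Hucont Hu
             Mr _ T V HMr HVsol HV0 HVK (Rdiv_lt_0_compat _ _ HK Rlt_0_2)). }
  assert (Hle : forall V1 V2, in_E1 U1m U1p V1 -> in_E1 U1m U1p V2 ->
    elliptic_sol c chi nu mu b r u V1 -> elliptic_sol c chi nu mu b r u V2 ->
    forall x, V1 x <= V2 x).
  { intros V1 V2 HV1 HV2 HS1 HS2.
    destruct (Henv V1 (proj2 HV1)) as [HV1b [_ HV1exp]].
    destruct (Henv V2 (proj2 HV2)) as [HV2b [HV2K _]].
    assert (Hspeed := root_speed_pos c theta1 r1 (proj1 Htheta1) (proj2 Htheta1) ltac:(lra)).
    exact (elliptic_sol_le c chi nu mu b r u _ Hchi Hnu Hmu Hbeta Hucont Hu _ T _ theta1 V1 V2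
             (Rdiv_lt_0_compat _ _ HK Rlt_0_2) Hspeed HS1 HS2 (Hpos V1 HV1 HS1) (Hpos V2 HV2 HS2)
             (fun x => proj2 (HV1b x)) (fun x => proj2 (HV2b x)) HV2K HV1exp). }
  split; [exact (Hpos Ustar Ustar_E1 Ustar_sol)|].
  intros V HV HVsol _ x. apply Rle_antisym; apply Hle; assumption.
Qed.
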